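(* Let $I$ be a (finite or infinite) interval of $\mathbb Z$ and $Z=\{(Z^{(t)}_s)_{s\ge t,s\in I}\}_{t\in I}$ a coalescent-walk process on $I$. Define the relation $\le_Z$ on $I$ by: $i\le_Z i$; for $i<j$, $i\le_Z j$ if $Z^{(i)}_j<0$ and $j\le_Z i$ if $Z^{(i)}_j\ge0$. Then $\le_Z$ is a total order on $I$.
   Context: A coalescent-walk process on $I$ is a family $\{(Z^{(t)}_s)_{s\ge t,s\in I}\}_{t\in I}$ of integer-valued walks such that $Z^{(t)}_t=0$ for every $t\in I$, and for $t'\ge t$ in $I$, if $Z^{(t)}_k\ge Z^{(t')}_k$ (resp. $\le$) then $Z^{(t)}_{k'}\ge Z^{(t')}_{k'}$ (resp. $\le$) for every $k'\ge k$. *)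

From Stdlib Require Import ZArith.
Open Scope Z_scope.

Definition is_interval (I : Z -> Prop) : Prop :=
  forall a b c, I a -> I c -> a <= b -> b <= c -> I b.

(* A coalescent-walk process on I: W t s stands for Z^{(t)}_s; only the values
   with t, s in I and s >= t are meaningful. *)
Definition coalescent_walk_process (I : Z -> Prop) (W : Z -> Z -> Z) : Prop :=
  (forall t, I t -> W t t = 0) /\
  (forall t t' k, I t -> I t' -> I k -> t <= t' -> t' <= k ->
     (W t k >= W t' k -> forall k', I k' -> k <= k' -> W t k' >= W t' k') /\
     (W t k <= W t' k -> forall k', I k' -> k <= k' -> W t k' <= W t' k')).

Definition le_Z (W : Z -> Z -> Z) (i j : Z) : Prop :=
  i = j \/ (i < j /\ W i j < 0) \/ (j < i /\ W j i >= 0).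

Definition total_order_on (I : Z -> Prop) (R : Z -> Z -> Prop) : Prop :=
  (forall i, I i -> R i i) /\
  (forall i j, I i -> I j -> R i j -> R j i -> i = j) /\
  (forall i j k, I i -> I j -> I k -> R i j -> R j k -> R i k) /\
  (forall i j, I i -> I j -> R i j \/ R j i).

(* For a < b, the walk started at a is compared with the walk started at b
   at time b, where the latter is 0: a <=_Z b when Z^(a) is strictly below,
   b <=_Z a when it is weakly above. The coalescence property says such a
   comparison between two walks persists at all later times, so among three
   starting times the comparison made at the middle one propagates to the
   last one; this is exactly what transitivity needs. *)

From Stdlib Require Import ZArith Lia.
Open Scope Z_scope.

Section CoalescentWalkOrder.

Variables (I : Z -> Prop) (W : Z -> Z -> Z).
Hypothesis HW : coalescent_walk_process I W.

Lemma walk_below_persists a b c :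
  I a -> I b -> I c -> a < b -> b <= c -> W a b < 0 -> W a c <= W b c.
Proof.
  intros Ia Ib Ic ab bc Wab.
  destruct HW as [W0 Wmono].
  destruct (Wmono a b b Ia Ib Ib ltac:(lia) ltac:(lia)) as [_ below].
  apply (below ltac:(rewrite W0 by exact Ib; lia) c Ic bc).
Qed.

Lemma walk_above_persists a b c :
  I a -> I b -> I c -> a < b -> b <= c -> W a b >= 0 -> W b c <= W a c.
Proof.
  intros Ia Ib Ic ab bc Wab.
  destruct HW as [W0 Wmono].
  destruct (Wmono a b b Ia Ib Ib ltac:(lia) ltac:(lia)) as [above _].
  enough (W a c >= W b c) by lia.
  apply (above ltac:(rewrite W0 by exact Ib; lia) c Ic bc).
Qed.

Lemma le_Z_trans i j k :
  I i -> I j -> I k -> le_Z W i j -> le_Z W j k -> le_Z W i k.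
Proof.
  unfold le_Z.
  intros Ii Ij Ik [<- | [[ij Wij] | [ji Wji]]] [<- | [[jk Wjk] | [kj Wkj]]];
    try tauto.
  - pose proof (walk_below_persists i j k Ii Ij Ik ij ltac:(lia) Wij); lia.
  - destruct (Z.lt_total i k) as [ik | [<- | ki]]; [| tauto |].
    + destruct (Z_lt_ge_dec (W i k) 0) as [Wik | Wik]; [lia |].
      pose proof (walk_above_persists i k j Ii Ik Ij ik ltac:(lia) Wik); lia.
    + destruct (Z_lt_ge_dec (W k i) 0) as [Wki | Wki]; [| lia].
      pose proof (walk_below_persists k i j Ik Ii Ij ki ltac:(lia) Wki); lia.
  - destruct (Z.lt_total i k) as [ik | [<- | ki]]; [| tauto |].
    + pose proof (walk_above_persists j i k Ij Ii Ik ji ltac:(lia) Wji); lia.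
    + pose proof (walk_below_persists j k i Ij Ik Ii jk ltac:(lia) Wjk); lia.
  - pose proof (walk_above_persists k j i Ik Ij Ii kj ltac:(lia) Wkj); lia.
Qed.

End CoalescentWalkOrder.

Lemma le_Z_refl (W : Z -> Z -> Z) i : le_Z W i i.
Proof. now left. Qed.

Lemma le_Z_antisym (W : Z -> Z -> Z) i j : le_Z W i j -> le_Z W j i -> i = j.
Proof. unfold le_Z; lia. Qed.

Lemma le_Z_total (W : Z -> Z -> Z) i j : le_Z W i j \/ le_Z W j i.
Proof. unfold le_Z; lia. Qed.

Theorem proposition2p9 (I : Z -> Prop) (W : Z -> Z -> Z) :
  is_interval I -> coalescent_walk_process I W -> total_order_on I (le_Z W).
Proof.
  intros _ HW.
  repeat split.
  - intros i _; apply le_Z_refl.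
  - intros i j _ _; apply le_Z_antisym.
  - intros i j k; apply (le_Z_trans I W HW).
  - intros i j _ _; apply le_Z_total.
Qed.
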